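(* Consider the two-source resistive circuit described in the context with $E_1=E_2=E\neq0$, and with the cross link of resistance $R_3>0$ connected. Let $\mathrm{LCL}(R_1,R_2,R_3)=\mathrm{Loss}/\mathrm{Loss}'$, where $\mathrm{Loss}=i_1^2R_1+i_2^2R_2+i_3^2R_3$ and $\mathrm{Loss}'=(2E)^2/(R_1+R_2)$. Then the LCL increases monotonically as $|R_1-R_2|$ increases: namely, for fixed $R_3>0$ and fixed value $r>0$ of one of the two resistances $R_1,R_2$, if the other resistance equals $r+h$ (respectively $r-h$, with $h<r$), then LCL is a strictly increasing function of $h=|R_1-R_2|\ge 0$.
   Context: The circuit consists of two DC voltage sources $E_1,E_2$ and resistors $R_1,R_2>0$, arranged in a single loop so that, when the cross link is absent, the same current $i_1=i_2=(E_1+E_2)/(R_1+R_2)$ flows through $R_1$ and $R_2$ (and the total loss is $\mathrm{Loss}'=(E_1+E_2)^2/(R_1+R_2)$). When a cross link containing a resistor $R_3>0$ is connected, the currents through $R_1,R_2,R_3$ are $$i_1=\frac{E_1(R_2+R_3)+E_2R_3}{R_1R_2+R_1R_3+R_2R_3},\quad i_2=\frac{E_1R_3+E_2(R_1+R_3)}{R_1R_2+R_1R_3+R_2R_3},\quad i_3=\frac{-E_1R_2+E_2R_1}{R_1R_2+R_1R_3+R_2R_3}.$$ The Loss Cost of the Link (LCL) is the ratio of the total heat loss after adding the link to the total heat loss before adding it. *)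

From Stdlib Require Import Reals.
Open Scope R_scope.

Definition den (R1 R2 R3 : R) : R := R1 * R2 + R1 * R3 + R2 * R3.

Definition i1 (E1 E2 R1 R2 R3 : R) : R :=
  (E1 * (R2 + R3) + E2 * R3) / den R1 R2 R3.
Definition i2 (E1 E2 R1 R2 R3 : R) : R :=
  (E1 * R3 + E2 * (R1 + R3)) / den R1 R2 R3.
Definition i3 (E1 E2 R1 R2 R3 : R) : R :=
  (- E1 * R2 + E2 * R1) / den R1 R2 R3.

Definition Loss (E1 E2 R1 R2 R3 : R) : R :=
  (i1 E1 E2 R1 R2 R3) ^ 2 * R1 + (i2 E1 E2 R1 R2 R3) ^ 2 * R2
  + (i3 E1 E2 R1 R2 R3) ^ 2 * R3.

Definition Loss' (E1 E2 R1 R2 : R) : R := (E1 + E2) ^ 2 / (R1 + R2).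

Definition LCL (E1 E2 R1 R2 R3 : R) : R :=
  Loss E1 E2 R1 R2 R3 / Loss' E1 E2 R1 R2.

(* With equal sources the link current and the losses collapse to the closed form
   LCL = (R1 + R2)(R1 + R2 + 4 R3) / (4 (R1 R2 + R1 R3 + R2 R3)), symmetric in R1, R2.
   For fixed R1 = a, the difference of two values of this form at R2 = b and R2 = b'
   factors as (b' - b) (a (b b' - a^2) + R3 ((a + b)(a + b') - 4 a^2)) over a positive
   denominator; both terms of the second factor are positive when a <= b < b' and
   negative when b' < b <= a, so LCL grows as R2 moves away from R1 on either side. *)
From Stdlib Require Import Reals Lra Psatz.
Open Scope R_scope.

Definition lcl_equal_sources (R1 R2 R3 : R) : R :=
  (R1 + R2) * (R1 + R2 + 4 * R3) / (4 * den R1 R2 R3).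

Lemma den_pos (R1 R2 R3 : R) : 0 < R1 -> 0 < R2 -> 0 < R3 -> 0 < den R1 R2 R3.
Proof. intros; unfold den; nra. Qed.

Lemma den_sym (R1 R2 R3 : R) : den R1 R2 R3 = den R2 R1 R3.
Proof. unfold den; ring. Qed.

Lemma LCL_equal_sources (E R1 R2 R3 : R) :
  E <> 0 -> 0 < R1 -> 0 < R2 -> 0 < R3 ->
  LCL E E R1 R2 R3 = lcl_equal_sources R1 R2 R3.
Proof.
  intros hE h1 h2 h3.
  pose proof (den_pos R1 R2 R3 h1 h2 h3) as hD.
  unfold LCL, Loss, Loss', i1, i2, i3, lcl_equal_sources, den in *.
  field; repeat split; lra.
Qed.

Lemma lcl_equal_sources_sym (R1 R2 R3 : R) :
  lcl_equal_sources R1 R2 R3 = lcl_equal_sources R2 R1 R3.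
Proof. unfold lcl_equal_sources; rewrite den_sym; f_equal; ring. Qed.

Lemma lcl_equal_sources_sub (a b b' c : R) :
  0 < a -> 0 < b -> 0 < b' -> 0 < c ->
  lcl_equal_sources a b' c - lcl_equal_sources a b c
  = (b' - b) * (a * (b * b' - a * a) + c * ((a + b) * (a + b') - 4 * a * a))
    / (4 * den a b c * den a b' c).
Proof.
  intros ha hb hb' hc.
  pose proof (den_pos a b c ha hb hc); pose proof (den_pos a b' c ha hb' hc).
  unfold lcl_equal_sources, den in *; field; lra.
Qed.

Lemma lcl_equal_sources_lt (a b b' c : R) :
  0 < a -> 0 < b -> 0 < b' -> 0 < c ->
  (a <= b /\ b < b') \/ (b' < b /\ b <= a) ->
  lcl_equal_sources a b c < lcl_equal_sources a b' c.
Proof.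
  intros ha hb hb' hc hbb'.
  apply Rminus_gt; rewrite lcl_equal_sources_sub by assumption.
  pose proof (den_pos a b c ha hb hc); pose proof (den_pos a b' c ha hb' hc).
  apply Rdiv_lt_0_compat; [|nra].
  destruct hbb' as [[hab hbb'] | [hbb' hba]].
  - assert (0 < b * b' - a * a) by nra.
    assert (0 < (a + b) * (a + b') - 4 * a * a) by nra.
    apply Rmult_lt_0_compat; nra.
  - assert (b * b' - a * a < 0) by nra.
    assert ((a + b) * (a + b') - 4 * a * a < 0) by nra.
    apply Rmult_neg_neg; nra.
Qed.

Theorem proposition2 (E R3 r : R) (hE : E <> 0) (hR3 : 0 < R3) (hr : 0 < r) :
  (* R1 = r fixed, R2 = r + h *)
  (forall h h' : R, 0 <= h -> h < h' ->
     LCL E E r (r + h) R3 < LCL E E r (r + h') R3) /\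
  (* R1 = r fixed, R2 = r - h, h < r *)
  (forall h h' : R, 0 <= h -> h < h' -> h' < r ->
     LCL E E r (r - h) R3 < LCL E E r (r - h') R3) /\
  (* R2 = r fixed, R1 = r + h *)
  (forall h h' : R, 0 <= h -> h < h' ->
     LCL E E (r + h) r R3 < LCL E E (r + h') r R3) /\
  (* R2 = r fixed, R1 = r - h, h < r *)
  (forall h h' : R, 0 <= h -> h < h' -> h' < r ->
     LCL E E (r - h) r R3 < LCL E E (r - h') r R3).
Proof.
  repeat split; intros h h' hh hhh'; try intros hh'r;
    rewrite !LCL_equal_sources by lra;
    try rewrite (lcl_equal_sources_sym (r + h)), (lcl_equal_sources_sym (r + h'));
    try rewrite (lcl_equal_sources_sym (r - h)), (lcl_equal_sources_sym (r - h'));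
    apply lcl_equal_sources_lt; lra.
Qed.
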